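(* Let $L:\mathbb{R}^d\to\mathbb{R}^{\mathcal{Y}}_+$ be a polyhedral loss, $\gamma:\Delta_{\mathcal{Y}}\rightrightarrows\mathcal{R}$ a finite property, and $\epsilon>0$. Let $\Psi$ be the link envelope of the general $\epsilon$-thickened link construction for $L,\gamma,\epsilon,\|\cdot\|_\infty$. Then a function $\psi:\mathbb{R}^d\to\mathcal{R}$ is produced by this construction (i.e., $\psi(u)\in\Psi(u)$ for all $u\in\mathbb{R}^d$) if and only if $\psi$ is $\epsilon$-separated with respect to $\mathrm{prop}[L]$ and $\gamma$.
   Context: $\mathcal{Y}$ is a finite label set, $\Delta_{\mathcal{Y}}$ the simplex, $\mathbb{R}^{\mathcal{Y}}_+$ the nonnegative orthant. A property $\gamma:\Delta_{\mathcal{Y}}\rightrightarrows\mathcal{R}$ maps each $p$ to a nonempty subset of $\mathcal{R}$; finite if $\mathcal{R}$ finite; level sets $\gamma_r=\{p:r\in\gamma(p)\}$. $L$ polyhedral: each coordinate is a max of finitely many affine functions; it elicits $\Gamma=\mathrm{prop}[L]$, $\Gamma(p)=\arg\min_u\langle p,L(u)\rangle$. Construction: $\mathcal{U}=\{\Gamma(p):p\in\Delta_{\mathcal{Y}}\}$, $\Gamma_U=\{p:\Gamma(p)=U\}$, $R_U=\{r\in\mathcal{R}:\Gamma_U\subseteq\gamma_r\}$; initialize $\Psi(u)=\mathcal{R}$ for all $u$; for each $U\in\mathcal{U}$ and each $u$ with $\inf_{u^*\in U}\|u^*-u\|_\infty<\epsilon$ set $\Psi(u)\leftarrow\Psi(u)\cap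 R_U$. A link $\psi$ is $\epsilon$-separated with respect to $\Gamma$ and $\gamma$ if for all $u$, $p$ with $\psi(u)\notin\gamma(p)$ we have $\inf_{a\in\Gamma(p)}\|u-a\|_\infty\ge\epsilon$. *)

From mathcomp Require Import all_boot all_order all_algebra.
From mathcomp Require Import boolp classical_sets reals.
Set Implicit Arguments. Unset Strict Implicit. Unset Printing Implicit Defensive.
Import Order.TTheory GRing.Theory Num.Theory.
Local Open Scope ring_scope.
Local Open Scope classical_set_scope.

Section Defs.
Variables (R : realType) (Y : finType) (d : nat).

Definition linf (u : 'rV[R]_d) : R := \big[Num.max/0]_(i < d) `|u ord0 i|.

Definition dotv (a u : 'rV[R]_d) : R := \sum_(i < d) a ord0 i * u ord0 i.

Definition simplex (p : Y -> R) : Prop :=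
  (forall y, 0 <= p y) /\ \sum_(y : Y) p y = 1.

Definition polyhedral (L : 'rV[R]_d -> Y -> R) : Prop :=
  forall y, exists (n : nat) (a : 'I_n.+1 -> 'rV[R]_d) (b : 'I_n.+1 -> R),
    forall u, L u y = \big[Num.max/(dotv (a ord0) u + b ord0)]_(i < n.+1)
                         (dotv (a i) u + b i).

Definition nonneg_loss (L : 'rV[R]_d -> Y -> R) : Prop :=
  forall u y, 0 <= L u y.

Definition expected_loss (p : Y -> R) (l : Y -> R) : R := \sum_(y : Y) p y * l y.

Definition propL (L : 'rV[R]_d -> Y -> R) (p : Y -> R) : set 'rV[R]_d :=
  [set u | forall u', expected_loss p (L u) <= expected_loss p (L u')].

Variable Rep : finType.

Definition is_property (gamma : (Y -> R) -> set Rep) : Prop :=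
  forall p, simplex p -> exists r, gamma p r.

Definition calU (L : 'rV[R]_d -> Y -> R) : set (set 'rV[R]_d) :=
  [set U | exists p, simplex p /\ U = propL L p].

Definition GammaU (L : 'rV[R]_d -> Y -> R) (U : set 'rV[R]_d) : set (Y -> R) :=
  [set p | simplex p /\ propL L p = U].

Definition level (gamma : (Y -> R) -> set Rep) (r : Rep) : set (Y -> R) :=
  [set p | simplex p /\ gamma p r].

Definition RU (L : 'rV[R]_d -> Y -> R) (gamma : (Y -> R) -> set Rep)
  (U : set 'rV[R]_d) : set Rep :=
  [set r | GammaU L U `<=` level gamma r].

(* the link envelope: Psi(u) = Rep intersected with R_U for every U in calU
   with inf_{u* in U} ||u* - u||_oo < eps, i.e. some u* in U is eps-close *)
Definition link_envelope (L : 'rV[R]_d -> Y -> R) (gamma : (Y -> R) -> set Rep)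
  (eps : R) (u : 'rV[R]_d) : set Rep :=
  [set r | forall U, calU L U ->
             (exists us, U us /\ linf (us - u) < eps) -> RU L gamma U r].

(* psi is eps-separated w.r.t. Gamma = prop[L] and gamma:
   psi(u) notin gamma(p) implies inf_{a in Gamma(p)} ||u - a||_oo >= eps,
   i.e. every a in Gamma(p) is at distance >= eps *)
Definition eps_separated (L : 'rV[R]_d -> Y -> R) (gamma : (Y -> R) -> set Rep)
  (eps : R) (psi : 'rV[R]_d -> Rep) : Prop :=
  forall u p, simplex p -> ~ gamma p (psi u) ->
    forall a, propL L p a -> eps <= linf (u - a).

End Defs.

From mathcomp Require Import all_boot all_order all_algebra.
From mathcomp Require Import boolp classical_sets reals.
Import Order.TTheory GRing.Theory Num.Theory.
Local Open Scope ring_scope.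
Local Open Scope classical_set_scope.

(* The equivalence holds pointwise in u. Psi(u) drops r exactly when some
   U = Gamma(p) comes eps-close to u while r lies outside gamma(q) for some q
   with Gamma(q) = U; taking q = p shows this is the same as some Gamma(p) with
   r outside gamma(p) coming eps-close to u. *)

Lemma linf_distC (R : realType) (d : nat) (a u : 'rV[R]_d) :
  linf (a - u) = linf (u - a).
Proof. by apply: eq_bigr => i _; rewrite !mxE distrC. Qed.

Section LinkEnvelope.
Variables (R : realType) (Y : finType) (d : nat) (Rep : finType).
Variables (L : 'rV[R]_d -> Y -> R) (gamma : (Y -> R) -> set Rep) (eps : R).

Lemma link_envelopeP (u : 'rV[R]_d) (r : Rep) :
  link_envelope L gamma eps u r <->
  (forall p, simplex p -> ~ gamma p r ->
     forall a, propL L p a -> eps <= linf (u - a)).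
Proof.
split.
- move=> Psi_r p sp not_gpr a pa; rewrite leNgt; apply/negP => close_a.
  have U_p : calU L (propL L p) by exists p.
  have near_U : exists us, propL L p us /\ linf (us - u) < eps.
    by exists a; rewrite linf_distC.
  by have [] := Psi_r _ U_p near_U p (conj sp erefl).
- move=> far U _ [us [Uus close_us]] q [sq Gq].
  split=> //; apply: contrapT => not_gqr.
  have := far q sq not_gqr us; rewrite Gq => /(_ Uus).
  by rewrite -linf_distC leNgt close_us.
Qed.

End LinkEnvelope.

Theorem proposition9 (R : realType) (Y : finType) (d : nat) (Rep : finType)
  (L : 'rV[R]_d -> Y -> R) (gamma : (Y -> R) -> set Rep) (eps : R)
  (hpoly : polyhedral L) (hnn : nonneg_loss L) (hgamma : is_property gamma)
  (heps : 0 < eps) (psi : 'rV[R]_d -> Rep) :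
  (forall u, link_envelope L gamma eps u (psi u)) <-> eps_separated L gamma eps psi.
Proof.
split=> [Psi_psi u | sep u]; first exact/link_envelopeP.
by apply/link_envelopeP; exact: sep.
Qed.
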